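(* For any $d_x\in\mathbb N$ and any $\alpha\in(0,0.5)$, there exists a $\textsc{ReLU}$ network $f:\mathbb R^{d_x}\rightarrow\mathbb R^{d_x}$ of width $d_x+1$ such that $f(x)=(1,\dots,1)$ for all $x\in\mathbb R^{d_x}\setminus[0,1]^{d_x}$, $f(x)=x$ for all $x\in[\alpha,1-\alpha]^{d_x}$, and $f(\mathbb R^{d_x})\subset[0,1]^{d_x}$.
   Context: A $\textsc{ReLU}$ network is $t_L\circ\sigma_{L-1}\circ\cdots\circ\sigma_1\circ t_1$ with affine $t_\ell:\mathbb R^{d_{\ell-1}}\to\mathbb R^{d_\ell}$ and coordinatewise $\textsc{ReLU}$ $\sigma_\ell(x)=\max\{x,0\}$; its width is $\max\{d_1,\dots,d_{L-1}\}$. *)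

From HB Require Import structures.
From mathcomp Require Import all_boot all_order all_algebra.
From mathcomp Require Import reals.
Set Implicit Arguments. Unset Strict Implicit. Unset Printing Implicit Defensive.
Import Order.TTheory GRing.Theory Num.Theory.
Local Open Scope ring_scope.

Definition relu {R : realType} {n : nat} (x : 'cV[R]_n) : 'cV[R]_n :=
  map_mx (fun a => Num.max a 0) x.

(* A ReLU network  t_L o sigma_{L-1} o ... o sigma_1 o t_1  from R^m to R^n,
   with affine maps t_l(x) = A x + b.
   - [Affine A b]      : the network consisting of a single affine map (L = 1).
   - [Layer A b N]     : first the affine map t_1(x) = A x + b into R^k,
                         then ReLU, then the network N : R^k -> R^n. *)
Inductive relu_net (R : realType) : nat -> nat -> Type :=
| Affine (m n : nat) : 'M[R]_(n, m) -> 'cV[R]_n -> relu_net R m n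
| Layer (m k n : nat) : 'M[R]_(k, m) -> 'cV[R]_k -> relu_net R k n -> relu_net R m n.

Fixpoint net_eval {R : realType} {m n : nat} (N : relu_net R m n) : 'cV[R]_m -> 'cV[R]_n :=
  match N in relu_net _ m n return 'cV[R]_m -> 'cV[R]_n with
  | Affine _ _ A b => fun x => A *m x + b
  | Layer _ _ _ A b N' => fun x => net_eval N' (relu (A *m x + b))
  end.

Fixpoint net_width {R : realType} {m n : nat} (N : relu_net R m n) : nat :=
  match N with
  | Affine _ _ _ _ => 0%N
  | Layer _ k _ _ _ N' => maxn k (net_width N')
  end.

Definition in_cube {R : realType} {d : nat} (a b : R) (x : 'cV[R]_d) : Prop :=
  forall i : 'I_d, a <= x i 0 <= b.

(* Each coordinate x is first folded to v = 2 - clamp(x, -1, 2) in [0, 3], which lies in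
   [1, 2] exactly when x lies in [0, 1].  One extra neuron carries a flag c, initially 0:
   for every coordinate, two layers of gain 1/alpha keep c = 0 while v is in
   [1 + alpha, 2 - alpha], push c to at least 1 when v is outside [1, 2], and keep c >= 1
   once it is there.  The last hidden layers compute relu(1 - relu(v - 2c - 1)),
   which is 2 - v = x when c = 0, is 1 when c >= 1, and always lies in [0, 1]. *)

From HB Require Import structures.
From mathcomp Require Import all_boot all_order all_algebra.
From mathcomp Require Import reals.
From mathcomp Require Import ring lra.
Set Implicit Arguments. Unset Strict Implicit. Unset Printing Implicit Defensive.
Import Order.TTheory GRing.Theory Num.Theory.
Local Open Scope ring_scope.

Section ScalarMaps.
Context {R : realType}.

Lemma max0_cases (a : R) :
  (Num.max a 0 = a /\ 0 <= a) \/ (Num.max a 0 = 0 /\ a < 0).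
Proof. by case: (ltP a 0) => h; [right | left]. Qed.

Definition mirror (x : R) : R := Num.max (3 - Num.max (x + 1) 0) 0.

Lemma mirror_bounds (x : R) : 0 <= mirror x <= 3.
Proof.
rewrite /mirror; move: (max0_cases (3 - Num.max (x + 1) 0)).
by case: (max0_cases (x + 1)) => [[-> ?]|[-> ?]] [[-> ?]|[-> ?]]; lra.
Qed.

Lemma mirror_unit (x : R) : 0 <= x <= 1 -> mirror x = 2 - x.
Proof.
move=> /andP[x0 x1].
by rewrite /mirror (@max_l _ _ (x + 1)) ?(@max_l _ _ (3 - (x + 1))); lra.
Qed.

Lemma mirror_in12 (x : R) : (1 <= mirror x <= 2) = (0 <= x <= 1).
Proof.
rewrite /mirror; move: (max0_cases (3 - Num.max (x + 1) 0)).
case: (max0_cases (x + 1)) => [[-> ?]|[-> ?]] [[-> ?]|[-> ?]];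
  by apply/andP/andP => -[? ?]; split; lra.
Qed.

Definition readout (v c : R) : R := Num.max (1 - Num.max (v - (2 * c + 1)) 0) 0.

Lemma readout_bounds (v c : R) : 0 <= readout v c <= 1.
Proof.
rewrite /readout; move: (max0_cases (1 - Num.max (v - (2 * c + 1)) 0)).
by case: (max0_cases (v - (2 * c + 1))) => [[-> ?]|[-> ?]] [[-> ?]|[-> ?]]; lra.
Qed.

Lemma readout_carried (v c : R) : v <= 3 -> 1 <= c -> readout v c = 1.
Proof.
move=> v3 c1.
by rewrite /readout (@max_r _ _ (v - _)) ?subr0 ?(@max_l _ _ 1); lra.
Qed.

Lemma readout_uncarried (v : R) : 1 <= v <= 2 -> readout v 0 = 2 - v.
Proof.
move=> /andP[v1 v2].
by rewrite /readout (@max_l _ _ (v - _)) ?(@max_l _ _ (1 - _)); lra.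
Qed.

Definition carry_step (a v c : R) : R :=
  Num.max (- a * v + 2 * a * Num.max (a * v + 2 * a * c + (1 - 2 * a)) 0 + (1 + a)) 0.

Definition carry (a c : R) (vs : seq R) : R := foldl (fun c v => carry_step a v c) c vs.

Lemma carry_step_ge0 (a v c : R) : 0 <= carry_step a v c.
Proof. by rewrite le_max lexx orbT. Qed.

Lemma carry_step_uncarried (a v : R) :
  1 <= a * (v - 1) -> 1 <= a * (2 - v) -> carry_step a v 0 = 0.
Proof.
move=> hv1 hv2.
by rewrite /carry_step (@max_r _ _ (a * v + _ + _)) ?(@max_r _ _ (- a * v + _ + _)); lra.
Qed.

Lemma carry_step_carried (a v c : R) :
  0 < a -> 0 <= v <= 3 -> 0 <= c -> (1 <= c) || ~~ (1 <= v <= 2) ->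
  1 <= carry_step a v c.
Proof.
move=> a0 /andP[v0 v3] c0 hc; rewrite /carry_step le_max; apply/orP; left.
(* For v < 1 the second layer fires on its own; otherwise the first one already gives 1. *)
set c1 := Num.max _ 0; have c10 : 0 <= c1 by rewrite le_max lexx orbT.
have [v1 | v1] := ltP v 1; first nra.
suff : 1 <= c1 by move=> ?; nra.
rewrite le_max; apply/orP; left.
case/orP: hc => [? | ]; first nra.
by rewrite v1 /= -ltNge => ?; nra.
Qed.

Lemma carry_uncarried (a : R) (vs : seq R) :
  all (fun v => (1 <= a * (v - 1)) && (1 <= a * (2 - v))) vs -> carry a 0 vs = 0.
Proof.
elim: vs => [|v vs IH] //= /andP[/andP[hv1 hv2] hvs].
by rewrite carry_step_uncarried // IH.
Qed.

Lemma carry_carried (a c : R) (vs : seq R) :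
  0 < a -> all (fun v => 0 <= v <= 3) vs -> 0 <= c ->
  (1 <= c) || has (fun v => ~~ (1 <= v <= 2)) vs -> 1 <= carry a c vs.
Proof.
move=> a0; elim: vs c => [|v vs IH] c /=; first by rewrite orbF.
move=> /andP[hv hvs] c0 hc; apply: IH => //; first exact: carry_step_ge0.
case/orP: hc => [c1 | /orP[hv' | ->]]; last by rewrite orbT.
  by rewrite carry_step_carried // c1.
by rewrite carry_step_carried // hv' orbT.
Qed.

End ScalarMaps.

Section Layers.
Context {R : realType}.

Lemma relu_col_mx m n (u : 'cV[R]_m) (w : 'cV[R]_n) :
  relu (col_mx u w) = col_mx (relu u) (relu w).
Proof. exact: map_col_mx. Qed.

Lemma relu_scalar (c : R) : relu (c%:M : 'cV[R]_1) = (Num.max c 0)%:M.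
Proof. by apply/matrixP => i j; rewrite !ord1 !mxE !mulr1n. Qed.

Lemma relu_id n (u : 'cV[R]_n) : (forall i, 0 <= u i 0) -> relu u = u.
Proof. by move=> u0; apply/matrixP => i j; rewrite ord1 mxE; apply/max_idPl. Qed.

Definition relu_layer n (s : 'cV[R]_n) (Ab : 'M[R]_n * 'cV[R]_n) : 'cV[R]_n :=
  relu (Ab.1 *m s + Ab.2).

Fixpoint stack_layers n p (ls : seq ('M[R]_n * 'cV[R]_n)) (N : relu_net R n p) :
    relu_net R n p :=
  if ls is Ab :: ls' then Layer Ab.1 Ab.2 (stack_layers ls' N) else N.

Lemma net_eval_stack_layers n p (ls : seq ('M[R]_n * 'cV[R]_n)) (N : relu_net R n p) s :
  net_eval (stack_layers ls N) s = net_eval N (foldl (@relu_layer n) s ls).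
Proof. by elim: ls s => [|Ab ls IH] s //=; rewrite IH. Qed.

Lemma net_width_stack_layers n p (ls : seq ('M[R]_n * 'cV[R]_n)) (N : relu_net R n p) :
  (net_width N <= n)%N -> (net_width (stack_layers ls N) <= n)%N.
Proof. by move=> wN; elim: ls => [|Ab ls IH] //=; rewrite geq_max leqnn. Qed.

Lemma relu_layer_block d P Q (S : 'M[R]_(1, d)) T (b : 'cV[R]_d) (r : R) v (c : R) :
  relu_layer (col_mx v c%:M) (block_mx P Q S T, col_mx b r%:M) =
  col_mx (relu (P *m v + Q *m c%:M + b)) (relu (S *m v + T *m c%:M + r%:M)).
Proof. by rewrite /relu_layer /= mul_block_col add_col_mx relu_col_mx. Qed.

Context {d : nat}.
Implicit Types (v : 'cV[R]_d) (c : R).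

Definition flip_layer (t : R) : 'M[R]_(d + 1) * 'cV[R]_(d + 1) :=
  (block_mx (- 1%:M) 0 0 0, col_mx (const_mx t) 0%:M).

Lemma relu_layer_flip t v c :
  relu_layer (col_mx v c%:M) (flip_layer t) = col_mx (relu (const_mx t - v)) 0%:M.
Proof.
rewrite relu_layer_block !mul0mx !addr0 !add0r relu_scalar maxxx mulNmx mul1mx.
by rewrite addrC.
Qed.

Definition carry_layer (e f g : R) (j : 'I_d) : 'M[R]_(d + 1) * 'cV[R]_(d + 1) :=
  (block_mx 1%:M 0 (e *: delta_mx 0 j) f%:M, col_mx 0 g%:M).

Lemma relu_layer_carry e f g j v c : (forall i, 0 <= v i 0) ->
  relu_layer (col_mx v c%:M) (carry_layer e f g j) =
  col_mx v (Num.max (e * v j 0 + f * c + g) 0)%:M.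
Proof.
move=> v0; rewrite relu_layer_block mul1mx mul0mx !addr0 relu_id //.
rewrite -scalemxAl -rowE; congr col_mx; apply/matrixP => i k.
by rewrite !ord1 !mxE big_ord1 !mxE !mulr1n.
Qed.

Definition discharge_layer : 'M[R]_(d + 1) * 'cV[R]_(d + 1) :=
  (block_mx 1%:M (const_mx (-2)) 0 0, col_mx (const_mx (-1)) 0%:M).

Lemma relu_layer_discharge v c :
  relu_layer (col_mx v c%:M) discharge_layer =
  col_mx (relu (v - const_mx (2 * c + 1))) 0%:M.
Proof.
rewrite relu_layer_block !mul0mx !addr0 add0r relu_scalar maxxx mul1mx.
congr (col_mx (relu _) _); apply/matrixP => i j.
by rewrite !mxE big_ord1 !mxE ord1 eqxx mulr1n; ring.
Qed.

End Layers.

Arguments relu_layer : simpl never.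

Section CubeNet.
Context {R : realType} {d : nat}.
Implicit Types (alpha : R) (x : 'cV[R]_d).

Definition carry_layers (a : R) (js : seq 'I_d) : seq ('M[R]_(d + 1) * 'cV[R]_(d + 1)) :=
  flatten [seq [:: carry_layer a (2 * a) (1 - 2 * a) j; carry_layer (- a) (2 * a) (1 + a) j]
          | j <- js].

Lemma relu_layers_carry (a : R) (js : seq 'I_d) (v : 'cV[R]_d) (c : R) :
  (forall i, 0 <= v i 0) ->
  foldl (@relu_layer R _) (col_mx v c%:M) (carry_layers a js) =
  col_mx v (carry a c [seq v j 0 | j <- js])%:M.
Proof.
by move=> v0; elim: js c => [|j js IH] c //=; rewrite !relu_layer_carry.
Qed.

Definition cube_net alpha : relu_net R d d :=
  Layer (col_mx 1%:M 0) (col_mx (const_mx 1) 0%:M)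
    (stack_layers (flip_layer 3 :: carry_layers alpha^-1 (enum 'I_d) ++
                   [:: discharge_layer; flip_layer 1])
       (Affine (row_mx 1%:M 0) 0)).

Lemma net_width_cube_net alpha : net_width (cube_net alpha) = d.+1.
Proof.
rewrite /cube_net; set N := stack_layers _ _.
have wN : (net_width N <= d + 1)%N by apply: net_width_stack_layers.
by change (maxn (d + 1) (net_width N) = d.+1); rewrite (maxn_idPl wN) addn1.
Qed.

Lemma net_eval_cube_net alpha x :
  net_eval (cube_net alpha) x =
  let c := carry alpha^-1 0 [seq mirror (x j 0) | j <- enum 'I_d] in
  map_mx (fun t => readout (mirror t) c) x.
Proof.
rewrite /= net_eval_stack_layers.
rewrite -[relu (block_mx _ _ _ _ *m _ + _)]/(relu_layer _ (flip_layer 3)).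
rewrite mul_col_mx add_col_mx mul1mx mul0mx add0r relu_col_mx relu_scalar maxxx.
rewrite relu_layer_flip.
have -> : relu (const_mx 3 - relu (x + const_mx 1)) = map_mx mirror x.
  by apply/matrixP => i j; rewrite !mxE.
rewrite foldl_cat relu_layers_carry => [|i]; last first.
  by rewrite mxE; case/andP: (mirror_bounds (x i 0)).
rewrite /= relu_layer_discharge relu_layer_flip mul_row_col mul1mx mul0mx !addr0.
apply/matrixP => i j; rewrite !mxE; congr (readout _ (carry _ _ _)).
by apply: eq_map => k; rewrite mxE.
Qed.

Lemma cube_net_range alpha x : in_cube 0 1 (net_eval (cube_net alpha) x).
Proof. by move=> i; rewrite net_eval_cube_net mxE; apply: readout_bounds. Qed.

Lemma cube_net_outside alpha x :
  0 < alpha -> ~ in_cube 0 1 x -> net_eval (cube_net alpha) x = const_mx 1.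
Proof.
move=> alpha0 xNcube; rewrite net_eval_cube_net; apply/matrixP => i j.
have mirror3 t : mirror t <= 3 by case/andP: (mirror_bounds t).
rewrite !mxE readout_carried //; apply: carry_carried => //; first by rewrite invr_gt0.
- by apply/allP => _ /mapP[k _ ->]; apply: mirror_bounds.
- apply/orP; right; rewrite has_map; apply/negPn/negP => /hasPn all01.
  by apply: xNcube => k; rewrite -mirror_in12; apply/negbNE/all01; rewrite mem_enum.
Qed.

Lemma cube_net_inside alpha x :
  0 < alpha -> in_cube alpha (1 - alpha) x -> net_eval (cube_net alpha) x = x.
Proof.
move=> alpha0 xcube; rewrite net_eval_cube_net.
have x01 i : 0 <= x i 0 <= 1 by case/andP: (xcube i) => ? ?; apply/andP; split; lra.
have -> : carry alpha^-1 0 [seq mirror (x j 0) | j <- enum 'I_d] = 0.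
  apply: carry_uncarried; apply/allP => _ /mapP[k _ ->].
  case/andP: (xcube k) => ? ?; rewrite mirror_unit // !ler_pdivlMl // !mulr1.
  by apply/andP; split; lra.
apply/matrixP => i j; rewrite ord1 mxE readout_uncarried ?mirror_in12 ?x01 //.
by rewrite mirror_unit ?x01 //; lra.
Qed.

End CubeNet.

(* The hypothesis [alpha < 1/2] only makes the inner cube nondegenerate. *)
Theorem lemma12 (R : realType) (dx : nat) (alpha : R) :
  0 < alpha -> alpha < 1 / 2 ->
  exists N : relu_net R dx dx,
    [/\ net_width N = dx.+1,
        (forall x : 'cV[R]_dx, ~ in_cube 0 1 x -> net_eval N x = const_mx 1),
        (forall x : 'cV[R]_dx, in_cube alpha (1 - alpha) x -> net_eval N x = x)
      & (forall x : 'cV[R]_dx, in_cube 0 1 (net_eval N x))].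
Proof.
move=> alpha0 _; exists (cube_net alpha); split.
- exact: net_width_cube_net.
- by move=> x; apply: cube_net_outside.
- by move=> x; apply: cube_net_inside.
- exact: cube_net_range.
Qed.
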